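(* Let $R\colon \mathbf{EA}\to[\mathbf{FinBool}^{op},\mathbf{Set}]$ and $L\colon[\mathbf{FinBool}^{op},\mathbf{Set}]\to\mathbf{EA}$ be the functors defined below, with $L$ left adjoint to $R$. The adjunction $L\dashv R$ is a reflection. More precisely, for every effect algebra $A$, the cocone under the diagram $D_A\colon \int R(A)\to\mathbf{EA}$ whose component at an object $(2^{[n]},g)$ is the morphism $g\colon 2^{[n]}\to A$ itself is a colimiting cocone. Consequently $L(R(A))\cong A$, naturally in $A$, i.e. the counit of the adjunction is an isomorphism.
   Context: An effect algebra is a partial algebra $(A;+,0,1)$, with a binary partial operation $+$ and constants $0,1$, satisfying: (E1) if $a+b$ is defined, then $b+a$ is defined and $a+b=b+a$; (E2) if $a+b$ and $(a+b)+c$ are defined, then $b+c$ and $a+(b+c)$ are defined and $(a+b)+c=a+(b+c)$; (E3) for every $a$ there is a unique $a^\perp$ such that $a+a^\perp=1$; (E4) if $a+1$ is defined, then $a=0$. One-element effect algebras (with $0=1$) are allowed. We write $a\perp b$ when $a+b$ is defined. A morphism of effect algebras $f\colon A_1\to A_2$ is a map with $f(1)=1$ such that $a\perp b$ implies $f(a)\perp f(b)$ and $f(a+b)=f(a)+f(b)$. $\mathbf{EA}$ denotes the category of effect algebras. Every Boolean algebra is an effect algebra: $x\perp y$ iff $x\wedge y=0$, and then $x+y=x\vee y$. This makes $\mathbf{Bool}$ a full subcategory of $\mathbf{EA}$. An observable is an $\mathbf{EA}$-morphism from a Boolean algebra into an effect algebra. For $n\in\mathbb N$ let $[n]=\{1,\dots,n\}$,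 with $[0]=\emptyset$. $\mathbf{FinBool}$ is the full subcategory of $\mathbf{Bool}$ on the objects $2^{[n]}$ (power-set Boolean algebras), $n\in\mathbb N$. $E\colon\mathbf{FinBool}\to\mathbf{EA}$ is the resulting fully faithful inclusion. $R(A)$ is the presheaf $R(A)(2^{[n]})=\mathbf{EA}(E(2^{[n]}),A)$, with $R(A)(f)(g)=g\circ E(f)$. For a presheaf $P$ on $\mathbf{FinBool}$, the category of elements $\int P$ has: - objects: pairs $(2^{[n]},g)$ with $g\in P(2^{[n]})$; - arrows $(2^{[n]},g)\to(2^{[n']},g')$: Boolean algebra morphisms $f\colon 2^{[n]}\to 2^{[n']}$ with $P(f)(g')=g$. For $P=R(A)$, this last condition reads $g'\circ f=g$. $\pi_P\colon\int P\to\mathbf{FinBool}$ is the projection. $L(P)=\varinjlim(E\circ\pi_P)$. $D_A$ denotes $E\circ\pi_{R(A)}\colon\int R(A)\to\mathbf{EA}$. *)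

From mathcomp Require Import all_boot.
Set Implicit Arguments. Unset Strict Implicit. Unset Printing Implicit Defensive.

(* A partial algebra (A; +, 0, 1); the partial operation + is modelled by
   an option-valued function: a + b is defined iff ea_plus a b = Some _. *)
Record eaStruct := EAStruct {
  ea_car :> Type;
  ea_plus : ea_car -> ea_car -> option ea_car;
  ea_zero : ea_car;
  ea_one : ea_car }.

Definition is_effect_algebra (A : eaStruct) : Prop :=
  (forall a b c : A, ea_plus a b = Some c -> ea_plus b a = Some c) /\
  (forall a b c ab abc : A, ea_plus a b = Some ab ->
              ea_plus ab c = Some abc ->
              exists bc, ea_plus b c = Some bc /\ ea_plus a bc = Some abc) /\
  (forall a : A, exists! b : A, ea_plus a b = Some (ea_one A)) /\
  (forall a c : A, ea_plus a (ea_one A) = Some c -> a = ea_zero A).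

Definition is_ea_hom (A B : eaStruct) (f : A -> B) : Prop :=
  f (ea_one A) = ea_one B /\
  (forall a b c : A, ea_plus a b = Some c -> ea_plus (f a) (f b) = Some (f c)).

Record ea_hom (A B : eaStruct) := EAHom {
  hom_fun :> A -> B;
  hom_prop : is_ea_hom hom_fun }.

(* The power-set Boolean algebra 2^[n] (subsets of 'I_n ~ [n]) viewed as an
   effect algebra: x ⊥ y iff x ∧ y = 0, and then x + y = x ∨ y. *)
Definition boolEA (n : nat) : eaStruct :=
  @EAStruct {set 'I_n}
    (fun x y => if [disjoint x & y] then Some (x :|: y) else None)
    set0 [set: 'I_n].

Definition is_bool_hom (n m : nat) (f : {set 'I_n} -> {set 'I_m}) : Prop :=
  f set0 = set0 /\ f [set: 'I_n] = [set: 'I_m] /\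
  (forall x y, f (x :|: y) = f x :|: f y) /\
  (forall x y, f (x :&: y) = f x :&: f y) /\
  (forall x, f (~: x) = ~: f x).

(* A cocone under D_A : ∫R(A) -> EA with vertex B: a component
   h (2^[n], g) : 2^[n] -> B for each object (2^[n], g) of ∫R(A), natural
   w.r.t. the arrows f : (2^[n], g) -> (2^[m], g') (Boolean morphisms with
   g' ∘ f = g). *)
Definition is_cocone (A B : eaStruct)
    (h : forall n : nat, ea_hom (boolEA n) A -> ea_hom (boolEA n) B) : Prop :=
  forall (n m : nat) (g : ea_hom (boolEA n) A) (g' : ea_hom (boolEA m) A)
         (f : {set 'I_n} -> {set 'I_m}),
    is_bool_hom f -> (forall x, g' (f x) = g x) ->
    forall x, h m g' (f x) = h n g x.

From mathcomp Require Import all_boot.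
From Stdlib Require Import ClassicalEpsilon.
Set Implicit Arguments. Unset Strict Implicit.

(* Every element [a] of an effect algebra is the value at [{0}] of the
   observable [2^[3] -> A] with atoms [a], [a^⊥], [0], and every observable
   [g : 2^[n] -> A] restricted along the Boolean map [2^[3] -> 2^[n]] sending
   the atoms to [x], [~x], [0] is exactly that observable for [a = g x].  So a
   cocone [h] is determined by [u a := h_3 (point observable of a) {0}], and
   [u (g x) = h_n g x].  Additivity of [u] comes from the observable with
   atoms [a], [b], [(a+b)^⊥], whose cocone component is itself additive. *)

Section EffectAlgebraFacts.

Variables (A : eaStruct) (HA : is_effect_algebra A).

Local Notation "0" := (ea_zero A).
Local Notation "1" := (ea_one A).

Lemma ea_plusC (a b c : A) : ea_plus a b = Some c -> ea_plus b a = Some c.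
Proof. by case: HA => plusC _; apply: plusC. Qed.

Lemma ea_plusA (a b c ab abc : A) :
  ea_plus a b = Some ab -> ea_plus ab c = Some abc ->
  exists bc, ea_plus b c = Some bc /\ ea_plus a bc = Some abc.
Proof. by case: HA => _ [plusA _]; apply: plusA. Qed.

Lemma perp_exists (a : A) : exists b, ea_plus a b = Some 1.
Proof. by case: HA => _ [_ [/(_ a) [b [ab _]] _]]; exists b. Qed.

Definition perp (a : A) : A :=
  proj1_sig (constructive_indefinite_description _ (perp_exists a)).

Lemma perpP (a : A) : ea_plus a (perp a) = Some 1.
Proof. by rewrite /perp; case: constructive_indefinite_description. Qed.

Lemma perp_uniq (a b : A) : ea_plus a b = Some 1 -> b = perp a.
Proof.
have [_ [_ [perp_unique _]]] := HA.
have [p [_ uniq_p]] := perp_unique a => Hab.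
by rewrite -(uniq_p _ Hab) -(uniq_p _ (perpP a)).
Qed.

Lemma perpK (a : A) : perp (perp a) = a.
Proof. by rewrite [RHS](perp_uniq (ea_plusC (perpP a))). Qed.

Lemma ea_plus1r_eq0 (a c : A) : ea_plus a 1 = Some c -> a = 0.
Proof. by case: HA => _ [_ [_ plus1]]; apply: plus1. Qed.

Lemma ea_plus0r (a : A) : ea_plus a 0 = Some a.
Proof.
have one0 : ea_plus 1 0 = Some 1.
  by rewrite -(ea_plus1r_eq0 (ea_plusC (perpP 1))) perpP.
have [t [at1 pt]] := ea_plusA (ea_plusC (perpP a)) one0.
by rewrite at1 (perp_uniq pt) perpK.
Qed.

Lemma ea_plus0l (a : A) : ea_plus 0 a = Some a.
Proof. exact/ea_plusC/ea_plus0r. Qed.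

Lemma perp0 : perp 0 = 1.
Proof. by rewrite -(perp_uniq (ea_plus0l 1)). Qed.

Lemma hom_set0 n (g : ea_hom (boolEA n) A) : g set0 = 0.
Proof.
case: g => g [g1 gD] /=.
have := gD set0 [set: 'I_n] [set: 'I_n].
rewrite /= disjoints_subset sub0set set0U g1 => /(_ erefl).
exact: ea_plus1r_eq0.
Qed.

Lemma hom_setT n (g : ea_hom (boolEA n) A) : g [set: 'I_n] = 1.
Proof. by case: g => g []. Qed.

Lemma hom_setC n (g : ea_hom (boolEA n) A) (x : {set 'I_n}) :
  g (~: x) = perp (g x).
Proof.
apply: perp_uniq; case: g => g [g1 gD] /=.
have := gD x (~: x) [set: 'I_n].
by rewrite /= disjoints_subset setCK subxx setUCr g1 => /(_ erefl).
Qed.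

Definition i0 : 'I_3 := @Ordinal 3 0 isT.
Definition i1 : 'I_3 := @Ordinal 3 1 isT.
Definition i2 : 'I_3 := @Ordinal 3 2 isT.

(* The observable of 2^[3] with atoms [a], [b], [d]; it is a morphism as soon
   as [a + b + d = 1], which is stated as [a + b = d^⊥]. *)
Definition obs3 (a b d : A) (S : {set 'I_3}) : A :=
  match i0 \in S, i1 \in S, i2 \in S with
  | false, false, false => 0
  | true, false, false => a
  | false, true, false => b
  | false, false, true => d
  | true, true, false => perp d
  | true, false, true => perp b
  | false, true, true => perp a
  | true, true, true => 1
  end.

Lemma obs3_hom (a b d : A) :
  ea_plus a b = Some (perp d) -> @is_ea_hom (boolEA 3) A (obs3 a b d).
Proof.
move=> ab.
have dd : ea_plus (perp d) d = Some 1 by exact/ea_plusC/perpP.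
have [t [bd at1]] := ea_plusA ab dd.
have [s [ad bs1]] := ea_plusA (ea_plusC ab) dd.
rewrite (perp_uniq at1) in bd; rewrite (perp_uniq bs1) in ad.
have aa := perpP a; have bb := perpP b.
split; first by rewrite /obs3 !in_setT.
move=> x y z /=; case: ifP => // xy [<-].
have notboth i : ~~ ((i \in x) && (i \in y)).
  by case: (boolP (i \in x)) => //= /(disjointFr xy) ->.
rewrite /obs3 !in_setU; move: (notboth i0) (notboth i1) (notboth i2).
case: (i0 \in x); case: (i1 \in x); case: (i2 \in x);
case: (i0 \in y); case: (i1 \in y); case: (i2 \in y) => //= _ _ _;
by rewrite ?ea_plus0r ?ea_plus0l //; apply: ea_plusC.
Qed.

Definition Obs3 (a b d : A) (ab : ea_plus a b = Some (perp d)) :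
  ea_hom (boolEA 3) A := EAHom (obs3_hom ab).

Lemma obs3_set1_0 (a b d : A) : obs3 a b d [set i0] = a.
Proof. by rewrite /obs3 !inE. Qed.

Lemma obs3_set1_1 (a b d : A) : obs3 a b d [set i1] = b.
Proof. by rewrite /obs3 !inE. Qed.

Lemma obs3_set2 (a b d : A) : obs3 a b d [set i0; i1] = perp d.
Proof. by rewrite /obs3 !inE. Qed.

Definition point_obs (a : A) : ea_hom (boolEA 3) A :=
  @Obs3 a (perp a) 0 (etrans (perpP a) (congr1 Some (esym perp0))).

End EffectAlgebraFacts.

Definition split_map n (x : {set 'I_n}) (S : {set 'I_3}) : {set 'I_n} :=
  [set z | ((i0 \in S) && (z \in x)) || ((i1 \in S) && (z \notin x))].

Lemma split_map_bool_hom n (x : {set 'I_n}) : is_bool_hom (split_map x).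
Proof.
rewrite /split_map; split; [|split; [|split; [|split]]].
- by apply/setP => z; rewrite !inE.
- by apply/setP => z; rewrite !inE; case: (z \in x).
- move=> S T; apply/setP => z; rewrite !inE.
  by case: (i0 \in S); case: (i1 \in S); case: (i0 \in T); case: (i1 \in T);
     case: (z \in x).
- move=> S T; apply/setP => z; rewrite !inE.
  by case: (i0 \in S); case: (i1 \in S); case: (i0 \in T); case: (i1 \in T);
     case: (z \in x).
- move=> S; apply/setP => z; rewrite !inE.
  by case: (i0 \in S); case: (i1 \in S); case: (z \in x).
Qed.

Lemma split_map_set1_0 n (x : {set 'I_n}) : split_map x [set i0] = x.
Proof. by apply/setP => z; rewrite !inE eqxx orbF. Qed.

Lemma hom_split_map (A : eaStruct) (HA : is_effect_algebra A) n
    (g : ea_hom (boolEA n) A) (x : {set 'I_n}) (S : {set 'I_3}) :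
  g (split_map x S) = point_obs HA (g x) S.
Proof.
have -> : split_map x S = if i0 \in S then (if i1 \in S then [set: 'I_n] else x)
                          else (if i1 \in S then ~: x else set0).
  apply/setP => z; rewrite !inE.
  by case: (i0 \in S); case: (i1 \in S); rewrite ?inE //; case: (z \in x).
rewrite /= /obs3; case: (i0 \in S); case: (i1 \in S); case: (i2 \in S) => /=;
by rewrite ?hom_setT ?hom_set0 ?hom_setC ?perpK ?perp0.
Qed.

Section CoconeFactorization.

Variables (A B : eaStruct) (HA : is_effect_algebra A).
Variables (h : forall n : nat, ea_hom (boolEA n) A -> ea_hom (boolEA n) B).
Hypothesis Hh : is_cocone h.

Definition cocone_map (a : A) : B := h (point_obs HA a) [set i0].

Lemma cocone_mapE n (g : ea_hom (boolEA n) A) (x : {set 'I_n}) :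
  cocone_map (g x) = h g x.
Proof.
rewrite /cocone_map -{2}(split_map_set1_0 x).
by apply/esym/Hh; [exact: split_map_bool_hom | exact: hom_split_map].
Qed.

Lemma cocone_map_hom : is_ea_hom cocone_map.
Proof.
split.
  by rewrite -(hom_setT (point_obs HA (ea_one A))) cocone_mapE hom_setT.
move=> a b c ab.
have ab' : ea_plus a b = Some (perp HA (perp HA c)) by rewrite perpK.
pose G := Obs3 ab'.
have Ga : G [set i0] = a := obs3_set1_0 _ _ _ _.
have Gb : G [set i1] = b := obs3_set1_1 _ _ _ _.
have Gc : G [set i0; i1] = c by rewrite /= obs3_set2 perpK.
rewrite -Ga -Gb -Gc !cocone_mapE.
case: (h G) => hG [_ hGD] /=; apply: hGD => /=.
by rewrite disjoints1 inE.
Qed.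

Lemma cocone_map_unique (u : A -> B) :
  (forall n (g : ea_hom (boolEA n) A) x, u (g x) = h g x) ->
  forall a, u a = cocone_map a.
Proof.
move=> uh a; have pa : point_obs HA a [set i0] = a := obs3_set1_0 _ _ _ _.
by rewrite -{1}pa uh.
Qed.

End CoconeFactorization.

Theorem mainTheorem1 (A : eaStruct) (HA : is_effect_algebra A)
    (B : eaStruct) (HB : is_effect_algebra B)
    (h : forall n : nat, ea_hom (boolEA n) A -> ea_hom (boolEA n) B)
    (Hh : is_cocone h) :
  exists u : ea_hom A B,
    (forall (n : nat) (g : ea_hom (boolEA n) A) (x : {set 'I_n}),
        u (g x) = h n g x) /\
    (forall u' : ea_hom A B,
        (forall (n : nat) (g : ea_hom (boolEA n) A) (x : {set 'I_n}),
            u' (g x) = h n g x) ->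
        forall a : A, u' a = u a).
Proof.
exists (EAHom (cocone_map_hom HA Hh)); split.
- exact: cocone_mapE.
- by move=> u' u'h; apply: cocone_map_unique.
Qed.
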